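(* Let $\mathcal{B}$ be a boolean algebra and let $\mathcal{M}$ be a well behaved $\mathcal{B}$-valued model for a relational language $\mathcal{L}$. The following are equivalent: (a) $\mathcal{M}$ is full; (b) for all $\mathcal{L}_{\mathcal{M}}$-formulae $\phi(x_0,x_1,\dots,x_n)$ and all $\tau_1,\dots,\tau_n\in M$ there exist $m\in\mathbb{N}$ and $\sigma_1,\dots,\sigma_m\in M$ such that \[\bigvee_{\tau\in M}[\![\phi(\tau,\tau_1,\dots,\tau_n)]\!]=\bigvee_{i=1}^m[\![\phi(\sigma_i,\tau_1,\dots,\tau_n)]\!].\]
   Context: Let $\mathcal{L}$ be a relational language (relation and constant symbols only) and $\mathcal{B}$ a boolean algebra. A $\mathcal{B}$-valued model $\mathcal{M}$ consists of a non-empty set $M$, a map $(\sigma,\tau)\mapsto[\![\sigma=\tau]\!]\in\mathcal{B}$, maps $(\sigma_1,\dots,\sigma_n)\mapsto[\![R(\sigma_1,\dots,\sigma_n)]\!]\in\mathcal{B}$ for each $n$-ary relation symbol $R$, and elements $c^{\mathcal{M}}\in M$ for each constant $c$, such that $[\![\sigma=\sigma]\!]=1$, $[\![\sigma=\tau]\!]=[\![\tau=\sigma]\!]$, $[\![\sigma=\tau]\!]\wedge[\![\tau=\pi]\!]\le[\![\sigma=\pi]\!]$ and $\bigwedge_i[\![\sigma_i=\tau_i]\!]\wedge[\![R(\vec\sigma)]\!]\le[\![R(\vec\tau)]\!]$. Formulas of $\mathcal{L}_{\mathcal{M}}=\mathcal{L}\cup\{c_\sigma:\sigma\in M\}$ without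 free variables are evaluated in the boolean completion $\mathrm{RO}(\mathcal{B}^+)$ of $\mathcal{B}$ (with $\mathcal{B}$ identified with a dense subalgebra): atomic ones as given, $[\![\varphi\wedge\psi]\!]=[\![\varphi]\!]\wedge[\![\psi]\!]$, $[\![\neg\varphi]\!]=\neg[\![\varphi]\!]$, $[\![\exists x\varphi(x)]\!]=\bigvee_{\tau\in M}[\![\varphi(\tau)]\!]$. $\mathcal{M}$ is well behaved if all these values lie in $\mathcal{B}$. For an ultrafilter $G$ on $\mathcal{B}$, $\mathcal{M}/_G$ is the two-valued structure with domain $\{[\sigma]_G:\sigma\in M\}$, where $[\sigma]_G=\{\tau\in M:[\![\tau=\sigma]\!]\in G\}$, in which $R([\sigma_1]_G,\dots,[\sigma_n]_G)$ holds iff $[\![R(\sigma_1,\dots,\sigma_n)]\!]\in G$, and constants are interpreted as $[c^{\mathcal{M}}]_G$. $\mathcal{M}$ is full if for every ultrafilter $G$ on $\mathcal{B}$, every formula $\phi(x_1,\dots,x_n)$ and all $\tau_1,\dots,\tau_n\in M$: $\mathcal{M}/_G\models\phi([\tau_1]_G,\dots,[\tau_n]_G)$ iff $[\![\phi(\tau_1,\dots,\tau_n)]\!]\in G$. *)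

From mathcomp Require Import all_boot all_order.
Set Implicit Arguments. Unset Strict Implicit. Unset Printing Implicit Defensive.
Import Order.Theory.
Local Open Scope order_scope.

(* Boolean algebras are MathComp's complemented distributive lattices with
   top and bottom: ctbDistrLatticeType. *)

Record language := Language {
  Rsym : Type;
  arity : Rsym -> nat;
  Csym : Type }.

Record bmodel (L : language) (d : Order.disp_t) (B : ctbDistrLatticeType d) :=
  BModel {
  dom :> Type;
  dom_inh : inhabited dom;
  eqv : dom -> dom -> B;
  relv : forall R : Rsym L, ('I_(arity R) -> dom) -> B;
  cstv : Csym L -> dom;
  eqv_refl : forall s, eqv s s = \top;
  eqv_sym : forall s t, eqv s t = eqv t s;
  eqv_trans : forall s t p, eqv s t `&` eqv t p <= eqv s p;
  relv_cong : forall R (s t : 'I_(arity R) -> dom),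
      (\meet_(i < arity R) eqv (s i) (t i)) `&` relv s <= relv t }.

(** Syntax of L_M-formulae (named variables; parameters c_sigma for sigma in M). *)
Inductive term (L : language) (M : Type) :=
  | tvar of nat
  | tcst of Csym L
  | tpar of M.

Inductive formula (L : language) (M : Type) :=
  | fEq of term L M & term L M
  | fRel (R : Rsym L) of ('I_(arity R) -> term L M)
  | fAnd of formula L M & formula L M
  | fNot of formula L M
  | fEx of nat & formula L M.

Definition upd (T : Type) (rho : nat -> T) (x : nat) (v : T) : nat -> T :=
  fun i => if i == x then v else rho i.

(** The boolean completion: a complete boolean algebra C with a sup operator,
    into which B embeds as a dense subalgebra via e. *)
Definition is_lub d (C : porderType d) (P : C -> Prop) (s : C) :=
  (forall c, P c -> c <= s) /\ (forall u, (forall c, P c -> c <= u) -> s <= u).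

Record is_completion d (B : ctbDistrLatticeType d) dC (C : ctbDistrLatticeType dC)
    (e : B -> C) (sup : (C -> Prop) -> C) : Prop := {
  sup_lub : forall P, is_lub P (sup P);
  e_inj : injective e;
  e_meet : forall a b, e (a `&` b) = e a `&` e b;
  e_join : forall a b, e (a `|` b) = e a `|` e b;
  e_compl : forall a, e (~` a) = ~` e a;
  e_top : e \top = \top;
  e_bot : e \bot = \bot;
  e_dense : forall c, c != \bot -> exists b, b != \bot /\ e b <= c }.

Section Semantics.
Variables (L : language) (d : Order.disp_t) (B : ctbDistrLatticeType d).
Variables (dC : Order.disp_t) (C : ctbDistrLatticeType dC).
Variables (e : B -> C) (sup : (C -> Prop) -> C) (M : bmodel L B).

Definition tval (rho : nat -> M) (t : term L M) : M :=
  match t with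
  | tvar i => rho i
  | tcst c => cstv M c
  | tpar s => s
  end.

(** Boolean value [[phi]] in the completion, under an assignment rho of the
    free variables (i.e. the value of the sentence phi(rho)). *)
Fixpoint bval (rho : nat -> M) (phi : formula L M) : C :=
  match phi with
  | fEq t u => e (eqv (tval rho t) (tval rho u))
  | fRel R ts => e (relv (fun i => tval rho (ts i)))
  | fAnd p q => bval rho p `&` bval rho q
  | fNot p => ~` bval rho p
  | fEx x p => sup (fun c => exists tau : M, c = bval (upd rho x tau) p)
  end.

Definition well_behaved : Prop :=
  forall rho phi, exists b : B, bval rho phi = e b.

Definition ultrafilter (G : B -> Prop) : Prop :=
  [/\ G \top, ~ G \bot,
      (forall a b, G a -> a <= b -> G b),
      (forall a b, G a -> G b -> G (a `&` b)) &
      (forall a, G a \/ G (~` a))].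

Record structure := Structure {
  sdom : Type;
  srel : forall R : Rsym L, ('I_(arity R) -> sdom) -> Prop;
  scst : Csym L -> sdom }.

Definition stval (S : structure) (pI : M -> sdom S) (rho : nat -> sdom S)
    (t : term L M) : sdom S :=
  match t with
  | tvar i => rho i
  | tcst c => scst S c
  | tpar s => pI s
  end.

Fixpoint sat (S : structure) (pI : M -> sdom S) (rho : nat -> sdom S)
    (phi : formula L M) : Prop :=
  match phi with
  | fEq t u => stval pI rho t = stval pI rho u
  | fRel R ts => srel (fun i => stval pI rho (ts i))
  | fAnd p q => sat pI rho p /\ sat pI rho q
  | fNot p => ~ sat pI rho p
  | fEx x p => exists a : sdom S, sat pI (upd rho x a) p
  end.

Definition eqclass (G : B -> Prop) (s : M) : M -> Prop := fun t => G (eqv t s).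

Definition qdom (G : B -> Prop) : Type :=
  {A : M -> Prop | exists s : M, A = eqclass G s}.

Definition cls (G : B -> Prop) (s : M) : qdom G :=
  exist _ (eqclass G s) (ex_intro _ s erefl).

Definition quotient (G : B -> Prop) : structure :=
  {| sdom := qdom G;
     srel := fun R (a : 'I_(arity R) -> qdom G) =>
       exists s : 'I_(arity R) -> M, (forall i, a i = cls G (s i)) /\ G (relv s);
     scst := fun c => cls G (cstv M c) |}.

Definition full : Prop :=
  forall G, ultrafilter G ->
  forall (phi : formula L M) (rho : nat -> M),
    sat (S := quotient G) (cls G) (fun i => cls G (rho i)) phi <->
    exists b : B, bval rho phi = e b /\ G b.

Definition witnessed_sups : Prop :=
  forall (phi : formula L M) (x : nat) (rho : nat -> M),
  exists s : seq M,
    sup (fun c => exists tau : M, c = bval (upd rho x tau) phi)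
    = \join_(sg <- s) bval (upd rho x sg) phi.

End Semantics.

From Pilot Require Import Defs.
From mathcomp Require Import all_boot all_order.
From mathcomp Require Import boolp classical_sets.
Set Implicit Arguments. Unset Strict Implicit. Unset Printing Implicit Defensive.
Import Order.Theory.
Local Open Scope order_scope.

(* (b) => (a) is Łoś's theorem for M/G, proved by induction on formulae; at an
   existential, (b) replaces the supremum by a finite join, and an ultrafilter
   containing a finite join contains one of its terms, which yields a witness.
   (a) => (b): if b = [[exists x phi]] lay below no finite join of the values
   [[phi(tau)]], the elements b /\ ~(finite join) would generate a proper
   filter.  An ultrafilter G extending it contains b, so by fullness
   M/G |= exists x phi, i.e. some [[phi(tau)]] lies in G; but ~[[phi(tau)]]
   lies in G as well. *)

Section Filters.
Variables (d : Order.disp_t) (B : ctbDistrLatticeType d).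

Definition proper_filter (F : B -> Prop) :=
  [/\ F \top, ~ F \bot, (forall a b, F a -> a <= b -> F b) &
      (forall a b, F a -> F b -> F (a `&` b))].

Definition upclosure (D : B -> Prop) : B -> Prop :=
  fun a => exists2 x, D x & x <= a.

Lemma proper_filter_upclosure (D : B -> Prop) :
  (exists x, D x) -> (forall x, D x -> x != \bot) ->
  (forall x y, D x -> D y -> exists2 z, D z & z <= x `&` y) ->
  proper_filter (upclosure D).
Proof.
move=> [x0 Dx0] Dnz Ddir; split.
- by exists x0 => //; rewrite lex1.
- by case=> x Dx; rewrite lex0; apply/negP/Dnz.
- by move=> a b [x Dx xa] ab; exists x => //; apply: le_trans ab.
- move=> a b [x Dx xa] [y Dy yb]; have [z Dz zxy] := Ddir x y Dx Dy.
  by exists z => //; apply: le_trans zxy _; apply: leI2.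
Qed.

Lemma proper_filter_chain (I : Type) (A : set I) (F : I -> B -> Prop) :
  (exists i, A i) -> (forall i, A i -> proper_filter (F i)) ->
  total_on A (fun i j => forall a, F i a -> F j a) ->
  proper_filter (fun a => exists2 i, A i & F i a).
Proof.
move=> [i0 Ai0] hF htot; split.
- by exists i0 => //; case: (hF _ Ai0).
- by case=> i Ai; case: (hF _ Ai).
- by move=> a b [i Ai Fa] ab; exists i => //; case: (hF _ Ai) => _ _ up _; apply: up ab.
- move=> a b [i Ai Fa] [j Aj Fb]; have [ij|ji] := htot i j Ai Aj.
  + by exists j => //; case: (hF _ Aj) => _ _ _; apply; first exact: ij.
  + by exists i => //; case: (hF _ Ai) => _ _ _; apply; last exact: ji.
Qed.

Lemma maximal_proper_filter_ultra (G : B -> Prop) : proper_filter G ->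
  (forall F, proper_filter F -> (forall a, G a -> F a) -> forall a, F a -> G a) ->
  ultrafilter G.
Proof.
move=> hG Gmax; have [Gtop Gbot Gup Gmeet] := hG; split => // a.
have [[g Gg ga]|noga] := pselect (exists2 g, G g & g `&` a = \bot).
  by right; apply: Gup Gg _; rewrite -disj_leC ga.
left; pose D x := exists2 g, G g & x = g `&` a.
have hD : proper_filter (upclosure D).
  apply: proper_filter_upclosure.
  - by exists (\top `&` a), \top.
  - by move=> _ [g Gg ->]; apply/eqP => ga; apply: noga; exists g.
  - move=> _ _ [g Gg ->] [h Gh ->]; exists ((g `&` h) `&` a).
      by exists (g `&` h) => //; apply: Gmeet.
    by rewrite meetACA meetxx.
apply: (Gmax _ hD); last by exists (\top `&` a); [exists \top | rewrite meet1x].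
by move=> g Gg; exists (g `&` a); [exists g | apply: leIl].
Qed.

Lemma proper_filter_ultra_ext (F : B -> Prop) : proper_filter F ->
  exists2 G, ultrafilter G & forall a, F a -> G a.
Proof.
move=> hF; pose T := {G : B -> Prop | proper_filter G /\ forall a, F a -> G a}.
pose R (G H : T) := `[< forall a, sval G a -> sval H a >].
have [| | |[G [hG FG]] Gmax] := @ZL_preorder T (exist _ F (conj hF (fun _ => id))) R.
- by move=> G; apply/asboolP.
- by move=> G H K /asboolP GH /asboolP HK; apply/asboolP => a /GH /HK.
- move=> A Atot; have [[G0 AG0]|noA] := pselect (exists G, A G); last first.
    by exists (exist _ F (conj hF (fun _ => id))) => G AG; case: noA; exists G.
  have hU : proper_filter (fun a => exists2 G : T, A G & sval G a).
    apply: proper_filter_chain; first by exists G0.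
      by move=> G _; case: (svalP G).
    by move=> G H AG AH; case: (Atot G H AG AH) => /asboolP; [left|right].
  have FU a : F a -> exists2 G : T, A G & sval G a.
    by move=> Fa; exists G0 => //; case: (svalP G0) => _; apply.
  exists (exist _ (fun a => exists2 G : T, A G & sval G a) (conj hU FU)).
  by move=> G AG; apply/asboolP => a Ga; exists G.
- exists G => //; apply: maximal_proper_filter_ultra => // H hH GH.
  have FH a : F a -> H a by move=> /FG /GH.
  exact/asboolP/(Gmax (exist _ H (conj hH FH)))/asboolT.
Qed.

Section Ultrafilter.
Variables (G : B -> Prop) (hG : ultrafilter G).

Lemma ultrafilter_le a b : G a -> a <= b -> G b.
Proof. by case: hG => _ _ up _ _; apply: up. Qed.

Lemma ultrafilterI a b : G (a `&` b) <-> G a /\ G b.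
Proof.
split=> [Gab|[Ga Gb]]; last by case: hG => _ _ _ + _; apply.
by split; apply: ultrafilter_le Gab _; [apply: leIl | apply: leIr].
Qed.

Lemma ultrafilterC a : G (~` a) <-> ~ G a.
Proof.
split=> [Gca Ga|nGa]; last by case: hG => _ _ _ _ /(_ a) [].
by case: hG => _ + _ _ _; apply; rewrite -(meetxC a); apply/ultrafilterI.
Qed.

Lemma ultrafilterU a b : G (a `|` b) <-> G a \/ G b.
Proof.
split=> [Gab|[Ga|Gb]]; last 2 first.
- by apply: ultrafilter_le Ga _; apply: leUl.
- by apply: ultrafilter_le Gb _; apply: leUr.
have [Ga|/ultrafilterC Gca] := pselect (G a); [by left | right].
have := proj2 (ultrafilterI _ _) (conj Gab Gca).
by rewrite meetUl meetxC join0x => /ultrafilter_le; apply; apply: leIl.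
Qed.

Lemma ultrafilter_big_meet (I : Type) (r : seq I) (f : I -> B) :
  (forall i, G (f i)) -> G (\meet_(i <- r) f i).
Proof.
move=> Gf; apply: (big_ind G) => //; first by case: hG.
by move=> a b Ga Gb; apply/ultrafilterI.
Qed.

Lemma ultrafilter_big_join (I : Type) (r : seq I) (f : I -> B) :
  G (\join_(i <- r) f i) -> exists i, G (f i).
Proof.
elim: r => [|i r IHr]; first by rewrite big_nil; case: hG.
by rewrite big_cons => /ultrafilterU [Gi|/IHr //]; exists i.
Qed.

End Ultrafilter.

Lemma ultrafilter_finite_cover (I : Type) (f : I -> B) (b : B) :
  (forall G, ultrafilter G -> G b -> exists i, G (f i)) ->
  exists r : seq I, b <= \join_(i <- r) f i.
Proof.
move=> cover; apply: contrapT => nocover.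
pose D x := exists r, x = b `&` ~` \join_(i <- r) f i.
have hD : proper_filter (upclosure D).
  apply: proper_filter_upclosure.
  - by exists (b `&` ~` \join_(i <- [::]) f i), [::].
  - move=> _ [r ->]; apply/negP; rewrite disj_leC complK => br.
    by apply: nocover; exists r.
  - move=> _ _ [r ->] [s ->]; exists (b `&` ~` \join_(i <- r ++ s) f i).
      by exists (r ++ s).
    by rewrite big_cat complU meetACA meetxx.
have [G hG DG] := proper_filter_ultra_ext hD.
have [|i Gfi] := cover G hG.
  by apply: DG; exists (b `&` ~` \join_(i <- [::]) f i); [exists [::] | apply: leIl].
apply/(ultrafilterC hG): Gfi; apply: DG.
by exists (b `&` ~` \join_(j <- [:: i]) f j); [exists [:: i] | rewrite big_seq1 leIr].
Qed.

End Filters.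

Section Completion.
Variables (d : Order.disp_t) (B : ctbDistrLatticeType d).
Variables (dC : Order.disp_t) (C : ctbDistrLatticeType dC).
Variables (e : B -> C) (sup : (C -> Prop) -> C) (hC : is_completion e sup).

Lemma completion_leE a b : (e a <= e b) = (a <= b).
Proof.
apply/idP/idP => /meet_idPl ab; apply/meet_idPl; last by rewrite -(e_meet hC) ab.
by apply: (e_inj hC); rewrite (e_meet hC).
Qed.

Lemma completion_big_join (I : Type) (r : seq I) (f : I -> B) :
  e (\join_(i <- r) f i) = \join_(i <- r) e (f i).
Proof. exact: (big_morph e (e_join hC) (e_bot hC)). Qed.

End Completion.

Lemma upd_comp (T U : Type) (f : T -> U) (rho : nat -> T) (x : nat) (v : T) :
  upd (f \o rho) x (f v) = f \o upd rho x v.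
Proof. by apply: funext => i; rewrite /upd /=; case: (i == x). Qed.

Section Quotient.
Variables (L : language) (d : Order.disp_t) (B : ctbDistrLatticeType d).
Variables (M : bmodel L B) (G : B -> Prop) (hG : ultrafilter G).

Lemma cls_eqP (s t : M) : cls G s = cls G t <-> G (eqv s t).
Proof.
split=> [/(congr1 (fun a => sval a s))|Gst].
  by rewrite /= /eqclass eqv_refl => <-; case: hG.
apply: eq_exist; apply: funext => u; apply: propext; rewrite /eqclass.
split=> Gu; apply: (ultrafilter_le hG) (eqv_trans u _ _); apply/(ultrafilterI hG).
  by split; [exact: Gu | exact: Gst].
by rewrite eqv_sym in Gst; split; [exact: Gu | exact: Gst].
Qed.

Lemma cls_surj (a : qdom M G) : exists s, a = cls G s.
Proof. by case: a => A [s As]; exists s; apply: eq_exist. Qed.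

Lemma stval_cls (rho : nat -> M) (t : term L M) :
  stval (S := quotient M G) (cls G) (cls G \o rho) t = cls G (Defs.tval rho t).
Proof. by case: t. Qed.

End Quotient.

Section BooleanValues.
Variables (L : language) (d : Order.disp_t) (B : ctbDistrLatticeType d).
Variables (dC : Order.disp_t) (C : ctbDistrLatticeType dC).
Variables (e : B -> C) (sup : (C -> Prop) -> C) (hC : is_completion e sup).
Variables (M : bmodel L B) (wb : well_behaved e sup M).

Definition bvalB (rho : nat -> M) (phi : formula L M) : B :=
  projT1 (cid (wb rho phi)).

Lemma bvalBE rho phi : bval e sup rho phi = e (bvalB rho phi).
Proof. exact: projT2 (cid (wb rho phi)). Qed.

Lemma bvalB_eq rho t u :
  bvalB rho (fEq t u) = eqv (Defs.tval rho t) (Defs.tval rho u).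
Proof. by apply: (e_inj hC); rewrite -bvalBE. Qed.

Lemma bvalB_rel rho (R : Rsym L) (ts : 'I_(arity R) -> term L M) :
  bvalB rho (fRel ts) = relv (fun i => Defs.tval rho (ts i)).
Proof. by apply: (e_inj hC); rewrite -bvalBE. Qed.

Lemma bvalB_and rho p q : bvalB rho (fAnd p q) = bvalB rho p `&` bvalB rho q.
Proof. by apply: (e_inj hC); rewrite -bvalBE (e_meet hC) /= !bvalBE. Qed.

Lemma bvalB_not rho p : bvalB rho (fNot p) = ~` bvalB rho p.
Proof. by apply: (e_inj hC); rewrite -bvalBE (e_compl hC) /= bvalBE. Qed.

Lemma bvalB_ex_ge rho x p t : bvalB (upd rho x t) p <= bvalB rho (fEx x p).
Proof.
by rewrite -(completion_leE hC) -!bvalBE; apply: (sup_lub hC _).1; exists t.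
Qed.

Lemma witnessed_supsP : witnessed_sups e sup M <->
  forall phi x rho, exists r : seq M,
    bvalB rho (fEx x phi) <= \join_(t <- r) bvalB (upd rho x t) phi.
Proof.
have joinE r phi x rho : \join_(t <- r) bval e sup (upd rho x t) phi
                         = e (\join_(t <- r) bvalB (upd rho x t) phi).
  by rewrite (completion_big_join hC); apply: eq_bigr => t _; apply: bvalBE.
split=> ws phi x rho; have [r hr] := ws phi x rho; exists r.
  move: hr; rewrite joinE -[sup _]/(bval e sup rho (fEx x phi)) bvalBE.
  by move=> /(e_inj hC) ->.
rewrite joinE -[sup _]/(bval e sup rho (fEx x phi)) bvalBE; congr e.
by apply: le_anti; rewrite hr; apply: joins_le => t _; apply: bvalB_ex_ge.
Qed.

Lemma fullP : full e sup M <-> forall G, ultrafilter G -> forall phi rho,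
  sat (S := quotient M G) (cls G) (cls G \o rho) phi <-> G (bvalB rho phi).
Proof.
have valP G rho phi : (exists b, bval e sup rho phi = e b /\ G b) <-> G (bvalB rho phi).
  split=> [[b []]|Gb]; last by exists (bvalB rho phi); rewrite bvalBE.
  by rewrite bvalBE => /(e_inj hC) ->.
by split=> hfull G hG phi rho; rewrite hfull // valP.
Qed.

Theorem los (ws : witnessed_sups e sup M) G (hG : ultrafilter G) phi rho :
  sat (S := quotient M G) (cls G) (cls G \o rho) phi <-> G (bvalB rho phi).
Proof.
move/witnessed_supsP: ws => ws.
elim: phi rho => [t u|R ts|p IHp q IHq|p IHp|x p IHp] rho /=.
- by rewrite bvalB_eq !stval_cls; apply: cls_eqP.
- rewrite bvalB_rel; split=> [[s [hs Gs]]|Gr]; last first.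
    by exists (fun i => Defs.tval rho (ts i)); split=> // i; rewrite stval_cls.
  apply: (ultrafilter_le hG) (relv_cong s _); apply/(ultrafilterI hG); split=> //.
  apply: (ultrafilter_big_meet hG) => i; apply/(cls_eqP hG).
  by rewrite -stval_cls -hs.
- by rewrite bvalB_and IHp IHq (ultrafilterI hG).
- by rewrite bvalB_not IHp (ultrafilterC hG).
- split=> [[a]|Gex].
    have [s ->] := cls_surj a; rewrite upd_comp IHp => /(ultrafilter_le hG); apply.
    exact: bvalB_ex_ge.
  have [r /(ultrafilter_le hG Gex) /(ultrafilter_big_join hG) [t Gt]] := ws p x rho.
  by exists (cls G t); rewrite upd_comp IHp.
Qed.

Lemma full_witnessed_sups : full e sup M -> witnessed_sups e sup M.
Proof.
move/fullP=> hfull; apply/witnessed_supsP => phi x rho.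
apply: ultrafilter_finite_cover => G hG /(hfull G hG (fEx x phi) rho) [a].
by have [t ->] := cls_surj a; rewrite upd_comp => /(hfull G hG); exists t.
Qed.

End BooleanValues.

Theorem mainTheorem2 (L : language) (d : Order.disp_t) (B : ctbDistrLatticeType d)
    (dC : Order.disp_t) (C : ctbDistrLatticeType dC)
    (e : B -> C) (sup : (C -> Prop) -> C) (hC : is_completion e sup)
    (M : bmodel L B) :
  well_behaved e sup M ->
  (full e sup M <-> witnessed_sups e sup M).
Proof.
move=> wb; split; first exact: full_witnessed_sups.
by move=> ws; apply/(fullP hC wb) => G hG phi rho; apply: los.
Qed.
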